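(* Let $Q=\{q_1,\ldots,q_n\}\subset\mathbb{P}^1$ be distinct points and $\vec g=(g_1,\ldots,g_n)$ effective divisors on $[0,1)$ of common degree $r$, $g_i=\sum_\alpha m_i(\alpha)[\alpha]$, with $\sum_{i,\alpha}m_i(\alpha)\alpha\in\mathbb{Z}$. Suppose the defect is zero, $r(n-2)-\sum_i T(g_i)=\delta(\vec g)=0$, but the superdefect is strictly positive, $\sigma(\vec g)>0$. Then it is possible to choose good arrangements $a_{i,1},\ldots,a_{i,r}$ of the $g_i$ and an integer $k_1$ such that, defining $k_2,\ldots,k_r$ by $k_{j+1}=\tau_j+k_j+2-n$, the parabolic bundle $E=\bigoplus_{j=1}^rE^j$, $E^j=[k_j;a_{1,j},\ldots,a_{n,j}]$, has $\deg^{\rm par}(E)=0$.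
   Context: A parabolic line bundle $[k;a_1,\ldots,a_n]$ ($k\in\mathbb{Z}$, $a_i\in[0,1)$) is $\mathcal{O}(k)$ with weight $a_i$ at $q_i$; its parabolic degree is $k+\sum_ia_i$, additive in direct sums. An arrangement of $g_i$ is a sequence $a_{i,1},\ldots,a_{i,r}\in[0,1)$ in which each $\alpha$ occurs $m_i(\alpha)$ times; indices modulo $r$. It is good if $\#\{t: a_{i,t}\ge a_{i,t+1}\}$ is minimal, the minimum being $T(g_i)$. $\tau_j=\#\{i: a_{i,j}\geq a_{i,j+1}\}$. With $\nu(g_i)=\max_\alpha m_i(\alpha)$, the superdefect is $\sigma(\vec g)=\sum_i\bigl(r^2-\sum_\alpha m_i(\alpha)^2-r(r-\nu(g_i))\bigr)$. *)

From mathcomp Require Import all_boot all_order all_algebra.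
Set Implicit Arguments. Unset Strict Implicit. Unset Printing Implicit Defensive.
Import Order.TTheory GRing.Theory Num.Theory.
Local Open Scope ring_scope.

(* An effective divisor of degree r on [0,1) is represented by any sequence
   of its points (with repetition) of length r; m(alpha) = count_mem alpha. *)
Definition mult (R : realFieldType) (g : seq R) (x : R) : nat := count_mem x g.

Definition cyc (R : realFieldType) (s : seq R) (t : nat) : R :=
  nth 0 s (t %% size s).

Definition descents (R : realFieldType) (s : seq R) : nat :=
  \sum_(t < size s) nat_of_bool (cyc s (t.+1) <= cyc s t)%R.

Definition arrangement (R : realFieldType) (g s : seq R) : bool := perm_eq s g.

Definition Tmin (R : realFieldType) (g : seq R) : nat :=
  \big[minn/descents g]_(s <- permutations g) descents s.

Definition good_arrangement (R : realFieldType) (g s : seq R) : bool :=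
  arrangement g s && (descents s == Tmin g).

Definition nu (R : realFieldType) (g : seq R) : nat :=
  \max_(x <- g) mult g x.

Definition sum_mult_sq (R : realFieldType) (g : seq R) : nat :=
  \sum_(x <- undup g) (mult g x) ^ 2.

Definition superdefect (R : realFieldType) (n r : nat) (g : 'I_n -> seq R) : int :=
  \sum_(i < n) ((r ^ 2)%:Z - (sum_mult_sq (g i))%:Z - (r%:Z * (r%:Z - (nu (g i))%:Z))).

Definition defect (R : realFieldType) (n r : nat) (g : 'I_n -> seq R) : int :=
  r%:Z * (n%:Z - 2) - \sum_(i < n) (Tmin (g i))%:Z.

Definition tau (R : realFieldType) (n : nat) (a : 'I_n -> seq R) (j : nat) : nat :=
  \sum_(i < n) nat_of_bool (cyc (a i) j.+1 <= cyc (a i) j)%R.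

(* k_0 = k1, k_{j+1} = tau_j + k_j + 2 - n  (0-indexed) *)
Fixpoint kseq (R : realFieldType) (n : nat) (a : 'I_n -> seq R) (k1 : int) (j : nat) : int :=
  match j with
  | 0 => k1
  | j'.+1 => (tau a j')%:Z + kseq a k1 j' + 2 - n%:Z
  end.

Definition pdeg_line (R : realFieldType) (n : nat) (k : int) (w : 'I_n -> R) : R :=
  k%:~R + \sum_(i < n) w i.

Definition pdeg_bundle (R : realFieldType) (n r : nat) (a : 'I_n -> seq R) (k1 : int) : R :=
  \sum_(j < r) pdeg_line (kseq a k1 j) (fun i => cyc (a i) j).

From mathcomp Require Import all_boot all_order all_algebra.
From mathcomp Require Import zify ring.
Set Implicit Arguments. Unset Strict Implicit. Unset Printing Implicit Defensive.
Import Order.TTheory GRing.Theory Num.Theory.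
Local Open Scope ring_scope.

(* Since k_{j+1} - k_j = tau_j + 2 - n, the parabolic degree of E is
   r k_1 + sum_i phi(a_i) + (2 - n) C(r, 2) + sum_{i,alpha} m_i(alpha) alpha, where
   phi(a) ([wdescents]) counts each linear descent a_{l+1} <= a_l with weight r - 1 - l,
   the number of k_j it contributes to.  So k_1 exists once sum_i phi(a_i) lies in a
   prescribed class modulo r.
   A cyclic arrangement has at least as many descents as occurrences of any value, and
   nu(g) strictly increasing runs through a most frequent value attain nu(g); hence
   T(g) = nu(g).  Letting each value alpha occur in runs 0, ..., m(alpha) - 2 and in one
   freely chosen further run, phi takes on good arrangements all values of an interval
   [c, c + D] with D = sum_alpha (nu - m(alpha)), and rotation shifts phi by nu mod r.
   Positive superdefect makes some g_i non-uniform, i.e. D > 0 for it; since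
   D = #supp(g_i) nu - r, the interval plus multiples of nu covers every residue mod r. *)

Section LinearDescents.
Variable R : realFieldType.
Implicit Types (b x y : R) (s a : seq R).

Fixpoint ldescents s : nat :=
  if s is x :: ((y :: _) as s') then (nat_of_bool (y <= x)%R + ldescents s')%N else 0.

Fixpoint wdescents s : nat :=
  if s is x :: ((y :: _) as s') then
    (nat_of_bool (y <= x)%R * size s' + wdescents s')%N
  else 0.

Definition junction_descent a s : nat :=
  if (a, s) is (x :: a', y :: _) then nat_of_bool (y <= last x a') else 0%N.

Lemma ldescents_cons2 x y s : ldescents [:: x, y & s] = ((y <= x)%R + ldescents (y :: s))%N.
Proof. by []. Qed.

Lemma wdescents_cons2 x y s :
  wdescents [:: x, y & s] = ((y <= x)%R * (size s).+1 + wdescents (y :: s))%N.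
Proof. by []. Qed.

Lemma ldescents_cat a s :
  ldescents (a ++ s) = (ldescents a + junction_descent a s + ldescents s)%N.
Proof.
elim: a => [|x [|y a] IH]; first by case: s.
  by clear IH; case: s.
rewrite !cat_cons ldescents_cons2 -cat_cons IH ldescents_cons2.
by clear IH; case: s => [|z s] /=; rewrite ?addn0 ?addnA.
Qed.

Lemma wdescents_cat a s : wdescents (a ++ s) =
  (wdescents a + size s * (ldescents a + junction_descent a s) + wdescents s)%N.
Proof.
elim: a => [|x [|y a] IH]; first by case: s => [|y s] //=; rewrite muln0.
  clear IH; case: s => [|y s] //.
  by rewrite cat1s wdescents_cons2 /junction_descent /=; lia.
rewrite !cat_cons wdescents_cons2 -cat_cons IH wdescents_cons2 ldescents_cons2 size_cat.
rewrite /junction_descent.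
by clear IH; case: s => [|z s] /=; nia.
Qed.

Lemma ldescentsE s :
  ldescents s = (\sum_(t < (size s).-1) (nth 0 s t.+1 <= nth 0 s t)%R)%N.
Proof.
elim: s => [|x [|y s] IH]; rewrite ?big_ord0 //.
by rewrite ldescents_cons2 big_ord_recl IH.
Qed.

Lemma wdescentsE s : wdescents s =
  (\sum_(j < size s) \sum_(l < j) (nth 0 s l.+1 <= nth 0 s l)%R)%N.
Proof.
elim: s => [|x [|y s] IH]; rewrite ?big_ord0 //; first by rewrite big_ord1 big_ord0.
rewrite wdescents_cons2 IH [RHS]big_ord_recl big_ord0 add0n.
under [RHS]eq_bigr => j _ do rewrite big_ord_recl.
by rewrite big_split /= sum_nat_const card_ord mulnC.
Qed.

Lemma descents_cons x s :
  descents (x :: s) = (ldescents (x :: s) + (x <= last x s)%R)%N.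
Proof.
rewrite /descents ldescentsE big_ord_recr /= -/(size s); congr (_ + _)%N.
  by apply: eq_bigr => t _; rewrite /cyc /= !modn_small //; have := ltn_ord t; lia.
by rewrite /cyc /= modnn modn_small // (last_nth x) [in RHS](set_nth_default 0).
Qed.

Lemma descents_le_ldescentsS s : (descents s <= (ldescents s).+1)%N.
Proof.
case: s => [|x s]; first by rewrite /descents big_ord0.
by rewrite descents_cons; case: (x <= last x s)%R; lia.
Qed.

Lemma count_mem_le_ldescents b x s :
  (count_mem b (x :: s) + (last x s < b)%R <= ldescents (x :: s) + (x <= b)%R)%N.
Proof.
elim: s x => [|y s IH] x; first by rewrite /= addn0; case: ltrgtP.
rewrite ldescents_cons2 /=; have := IH y; rewrite /=.
case: (ltrgtP x b) => [xb|xb|->]; case: (ltrgtP y b) => [yb|yb|yb]; try lia.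
all: try by rewrite (le_trans (ltW yb) (ltW xb)); lia.
all: try by rewrite yb ltW //; lia.
all: try by rewrite (ltW yb); lia.
all: by rewrite yb lexx; lia.
Qed.

Lemma count_mem_le_descents b s : (0 < size s)%N -> (count_mem b s <= descents s)%N.
Proof.
case: s => [|x s] // _; rewrite descents_cons.
have := count_mem_le_ldescents b x s.
case: (leP x b) => xb; case: (ltP (last x s) b) => lb; try lia.
by rewrite (le_trans xb lb); lia.
Qed.

Lemma descents_rot1 s : descents (rot 1 s) = descents s.
Proof.
case: s => [|x [|y s]] //.
rewrite rot1_cons rcons_cons !descents_cons -cats1 -cat_cons ldescents_cat last_cat.
by rewrite ldescents_cons2 /junction_descent /=; lia.
Qed.

Lemma wdescents_rot1 s : wdescents (rot 1 s) = wdescents s + descents s %[mod size s].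
Proof.
case: s => [|x [|y s]]; [by rewrite /descents big_ord0 | by rewrite !modn1 |].
rewrite -(modnMDl (y <= x)%R (wdescents (rot 1 _))); congr (_ %% _)%N.
rewrite rot1_cons rcons_cons -cats1 -cat_cons wdescents_cat descents_cons.
rewrite ldescents_cons2 wdescents_cons2 /junction_descent /=.
by case: s => [|z s] /=; nia.
Qed.

Lemma ldescents_sorted s : sorted <%R s -> ldescents s = 0%N.
Proof.
elim: s => [|x [|y s] IH] // /andP[xy ys].
by rewrite ldescents_cons2 IH // leNgt xy.
Qed.

Lemma wdescents_sorted s : sorted <%R s -> wdescents s = 0%N.
Proof.
elim: s => [|x [|y s] IH] // /andP[xy ys].
by rewrite wdescents_cons2 IH // leNgt xy.
Qed.

Lemma sorted_last_ge b x s : sorted <%R (x :: s) -> b \in x :: s -> b <= last x s.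
Proof.
elim: s x b => [|y s IH] x b /=; first by rewrite inE => _ /eqP ->.
case/andP=> xy ys; rewrite inE => /predU1P[->|]; last exact: IH.
exact: le_trans (ltW xy) (IH y y ys (mem_head _ _)).
Qed.

Lemma junction_descent_sorted b a s t :
    sorted <%R a -> b \in a -> sorted <%R s -> b \in s ->
  junction_descent a (s ++ t) = 1%N.
Proof.
case: a => [|x a] //; case: s => [|y s] // sa ba ys bs.
suff yb : y <= b by rewrite /junction_descent /= (le_trans yb (sorted_last_ge sa ba)).
move: bs; rewrite inE => /predU1P[-> //|bs].
by have /allP/(_ b bs)/ltW := order_path_min (@lt_trans _ _) ys.
Qed.

Section Runs.
Variable b : R.
Implicit Type ss : seq (seq R).
Let run_through s := sorted <%R s && (b \in s).

Lemma ldescents_flatten_runs ss :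
  all run_through ss -> ldescents (flatten ss) = (size ss).-1.
Proof.
elim: ss => [|s [|s' ss] IH] //= /andP[/andP[s_lt bs] hss].
  by rewrite cats0 ldescents_sorted.
rewrite ldescents_cat IH // ldescents_sorted //.
case/andP: hss => /andP[s'_lt bs'] _.
by rewrite (junction_descent_sorted _ s_lt bs s'_lt bs').
Qed.

Lemma wdescents_flatten_runs ss : all run_through ss ->
  wdescents (flatten ss) = (\sum_(0 <= u < size ss) u * size (nth [::] ss u))%N.
Proof.
elim: ss => [|s ss IH] /=; first by rewrite big_geq.
case/andP=> /andP[s_lt bs] hss; rewrite big_nat_recl // mul0n add0n.
rewrite wdescents_cat IH // wdescents_sorted // ldescents_sorted //.
have -> : (size (flatten ss) * junction_descent s (flatten ss)
            = \sum_(s' <- ss) size s')%N.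
  rewrite size_flatten sumnE big_map.
  case: ss hss {IH} => [|s' ss] /=; first by rewrite big_nil.
  case/andP=> /andP[s'_lt bs'] _.
  by rewrite (junction_descent_sorted _ s_lt bs s'_lt bs') muln1.
by rewrite (big_nth [::]) add0n -big_split; apply: eq_bigr => u _; rewrite mulSn.
Qed.

End Runs.
End LinearDescents.

Lemma sum_count_mem_undup (T : eqType) (s : seq T) :
  (\sum_(x <- undup s) count_mem x s)%N = size s.
Proof.
rewrite -sum1_size -(perm_big _ (perm_count_undup s)) big_flatten big_map /=.
by apply: eq_bigr => x _; rewrite big_nseq iter_addn_0 mul1n.
Qed.

Lemma sum_mask_lt_or_eq (f : nat -> nat) a c n : (a <= c < n)%N ->
  (\sum_(0 <= u < n) f u * ((u < a) || (u == c)))%N = (\sum_(0 <= u < a) f u + f c)%N.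
Proof.
case/andP=> ac cn.
suff -> : (\sum_(0 <= u < n) f u * ((u < a) || (u == c)))%N
          = (\sum_(0 <= u < minn a n) f u + (c < n) * f c)%N.
  by rewrite cn mul1n (minn_idPl (leq_trans ac (ltnW cn))).
elim: n {cn} => [|n IH]; first by rewrite minn0 !big_geq.
rewrite big_nat_recr //= IH; case: (ltnP n a) => na.
  by rewrite (minn_idPr na) big_nat_recr //=; lia.
rewrite (minn_idPl (leq_trans na (leqnSn n))); case: (eqVneq n c) => [<-|]; lia.
Qed.

Lemma exists_bounded_summands (T : eqType) (l : seq T) (c : T -> nat) t :
    uniq l -> (t <= \sum_(y <- l) c y)%N ->
  exists2 d : T -> nat, {in l, forall y, d y <= c y}%N & (\sum_(y <- l) d y)%N = t.
Proof.
elim: l t => [|x l IH] t /=.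
  by rewrite big_nil leqn0 => _ /eqP->; exists (fun=> 0%N); rewrite ?big_nil.
case/andP=> xl ul; rewrite big_cons => ht.
have [d dc dt] := IH (t - minn (c x) t)%N ul ltac:(lia).
exists (fun y => if y == x then minn (c x) t else d y).
  by move=> y; rewrite inE; case: eqP => [-> _|_ /= /dc //]; apply: geq_minl.
rewrite big_cons eqxx (eq_big_seq d) ?dt; first by lia.
by move=> y yl; case: eqP => // yx; rewrite -yx yl in xl.
Qed.

Lemma cover_residues_interval_multiples (r D V v base N : nat) :
    (0 < r)%N -> (0 < D)%N -> D = V * v %[mod r] ->
  exists t k, (t <= D)%N /\ N = base + t + k * v %[mod r].
Proof.
move=> r_gt0 D_gt0 DV.
suff cover M : (base <= M)%N -> exists t k, (t <= D)%N /\ M = base + t + k * v %[mod r].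
  have [t [k [tD Nt]]] := cover (N + base * r)%N ltac:(nia).
  by exists t, k; rewrite -Nt addnC modnMDl.
elim/ltn_ind: M => M IH bM; have [MD|DM] := leqP M (base + D).
  by exists (M - base)%N, 0%N; split; [lia | congr (_ %% _)%N; lia].
have [t [k [tD Mt]]] := IH (M - D)%N ltac:(lia) ltac:(lia).
exists t, (k + V)%N; split => //.
have -> : M = (M - D + D)%N by lia.
by rewrite -modnDm Mt DV modnDm mulnDl addnA.
Qed.

Section MostFrequentValue.
Variable R : realFieldType.
Implicit Types (b y : R) (g s : seq R).

Lemma mult_le_nu g y : (mult g y <= nu g)%N.
Proof.
have [yg|/count_memPn yg] := boolP (y \in g); first exact: leq_bigmax_seq.
by rewrite /mult yg.
Qed.

Lemma mult_gt0 g y : (0 < mult g y)%N = (y \in g).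
Proof. by rewrite -has_count has_pred1. Qed.

Lemma exists_mult_nu g : exists b, mult g b = nu g.
Proof.
have : nu g = 0%N \/ exists b, mult g b = nu g.
  apply: (big_ind (fun v => v = 0%N \/ exists b, mult g b = v)) => [||y _].
  - by left.
  - move=> u v [->|[b <-]]; first by rewrite max0n.
    case=> [->|[c <-]]; first by rewrite maxn0; right; exists b.
    by right; case: (leqP (mult g b) (mult g c)) => bc; [exists c | exists b].
  - by right; exists y.
case=> [nu0|//]; exists 0; apply/eqP; rewrite nu0 -leqn0 -nu0; exact: mult_le_nu.
Qed.

Lemma Tmin_le g s : perm_eq s g -> (Tmin g <= descents s)%N.
Proof.
rewrite /Tmin -mem_permutations; elim: (permutations g) => [|p l IH] //.
rewrite inE big_cons => /predU1P[<-|/IH]; first exact: geq_minl.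
exact: leq_trans (geq_minr _ _).
Qed.

Lemma nu_le_Tmin g : (nu g <= Tmin g)%N.
Proof.
case: g => [|x g]; first by rewrite /nu big_nil.
have [b <-] := exists_mult_nu (x :: g).
rewrite /Tmin big_seq.
apply: (big_ind (fun v => mult (x :: g) b <= v)%N) => [||p].
- exact: count_mem_le_descents.
- by move=> p q; rewrite leq_min => ->.
- rewrite mem_permutations => pg; rewrite /mult -(permP pg).
  by apply: count_mem_le_descents; rewrite (perm_size pg).
Qed.

End MostFrequentValue.

Section RunArrangement.
Variables (R : realFieldType) (g : seq R) (w : R -> nat).

Definition run (u : nat) : seq R :=
  [seq y <- sort <=%R (undup g) | (u < (mult g y).-1)%N || (u == w y)].

Definition run_arrangement : seq R := flatten [seq run u | u <- iota 0 (nu g)].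

Hypothesis w_range : {in g, forall y, (mult g y).-1 <= w y < nu g}%N.

Lemma sorted_run u : sorted <%R (run u).
Proof. by apply: lt_sorted_filter; rewrite sort_lt_sorted undup_uniq. Qed.

Lemma uniq_run u : uniq (run u).
Proof. by rewrite filter_uniq ?sort_uniq ?undup_uniq. Qed.

Lemma mem_run u y : (y \in run u) = (y \in g) && ((u < (mult g y).-1)%N || (u == w y)).
Proof. by rewrite mem_filter mem_sort mem_undup andbC. Qed.

Lemma mem_run_nu b u : mult g b = nu g -> (u < nu g)%N -> b \in run u.
Proof.
move=> b_max u_lt; have bg : b \in g by rewrite -mult_gt0 b_max; lia.
by rewrite mem_run bg /=; have := w_range bg; rewrite b_max; lia.
Qed.

Lemma all_runs_through b : mult g b = nu g ->
  all (fun s => sorted <%R s && (b \in s)) [seq run u | u <- iota 0 (nu g)].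
Proof.
move=> b_max; apply/allP => s /mapP[u]; rewrite mem_iota => /andP[_ u_lt] ->.
by rewrite sorted_run mem_run_nu.
Qed.

Lemma perm_run_arrangement : perm_eq run_arrangement g.
Proof.
apply/allP => y _; apply/eqP; rewrite /run_arrangement count_flatten sumnE !big_map.
under eq_bigr => u _ do rewrite (count_uniq_mem _ (uniq_run u)) mem_run.
have [yg|yNg] := boolP (y \in g); last by rewrite (count_memPn yNg) big1.
have := sum_mask_lt_or_eq (fun=> 1%N) (w_range yg).
rewrite sum_nat_const_nat {1}/index_iota !subn0 muln1 (eq_bigr _ (fun u _ => mul1n _)) /=.
move=> ->.
by rewrite addn1 prednK ?mult_gt0.
Qed.

Lemma descents_run_arrangement : (descents run_arrangement <= nu g)%N.
Proof.
have [b b_max] := exists_mult_nu g.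
have [nu0|nu_gt0] := posnP (nu g); first by rewrite /run_arrangement nu0 /descents big_ord0.
apply: leq_trans (descents_le_ldescentsS _) _.
by rewrite (ldescents_flatten_runs (all_runs_through b_max)) size_map size_iota prednK.
Qed.

Lemma wdescents_run_arrangement :
  wdescents run_arrangement = (\sum_(y <- undup g) ('C((mult g y).-1, 2) + w y))%N.
Proof.
have [b b_max] := exists_mult_nu g.
rewrite (wdescents_flatten_runs (all_runs_through b_max)) size_map size_iota.
rewrite -(perm_big _ (permEl (perm_sort <=%R _))) /=.
transitivity (\sum_(y <- sort <=%R (undup g))
  \sum_(0 <= u < nu g) u * ((u < (mult g y).-1) || (u == w y)))%N.
  rewrite exchange_big /=; apply: eq_big_nat => u u_lt.
  rewrite (nth_map 0%N) ?size_iota // nth_iota // size_filter.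
  by rewrite -sumn_count sumnE big_map big_distrr.
apply: eq_big_seq => y; rewrite mem_sort mem_undup => yg.
by rewrite sum_mask_lt_or_eq ?w_range // bin2_sum.
Qed.

End RunArrangement.

Section GoodArrangements.
Variable R : realFieldType.
Implicit Types (g s : seq R).

Lemma Tmin_nu g : Tmin g = nu g.
Proof.
apply/eqP; rewrite eqn_leq nu_le_Tmin andbT.
have w_range : {in g, forall y, (mult g y).-1 <= (mult g y).-1 < nu g}%N.
  by move=> y yg; rewrite leqnn prednK ?mult_le_nu ?mult_gt0.
exact: leq_trans (Tmin_le (perm_run_arrangement w_range))
                 (descents_run_arrangement w_range).
Qed.

Lemma good_arrangementE g s :
  good_arrangement g s = perm_eq s g && (descents s == nu g).
Proof. by rewrite /good_arrangement /arrangement Tmin_nu. Qed.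

Lemma good_run_arrangement g w : {in g, forall y, (mult g y).-1 <= w y < nu g}%N ->
  good_arrangement g (run_arrangement g w).
Proof.
move=> w_range; rewrite good_arrangementE perm_run_arrangement //= eqn_leq.
rewrite descents_run_arrangement //= -Tmin_nu.
exact/Tmin_le/perm_run_arrangement.
Qed.

Lemma good_arrangement_wdescents_interval g t :
    (t <= \sum_(y <- undup g) (nu g - mult g y))%N ->
  exists2 s, good_arrangement g s
           & wdescents s = (\sum_(y <- undup g) 'C(mult g y, 2) + t)%N.
Proof.
move=> t_le; have [d d_le <-] := exists_bounded_summands (undup_uniq g) t_le.
pose w y := ((mult g y).-1 + d y)%N.
have w_range : {in g, forall y, (mult g y).-1 <= w y < nu g}%N.
  move=> y yg; have := d_le y; rewrite mem_undup => /(_ yg).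
  by have := mult_le_nu g y; rewrite -mult_gt0 in yg; rewrite /w; lia.
exists (run_arrangement g w); first exact: good_run_arrangement.
rewrite wdescents_run_arrangement // -big_split; apply: eq_big_seq => y.
rewrite mem_undup -mult_gt0 => /prednK {2}<-.
by rewrite binS bin1 addnA.
Qed.

Lemma exists_good_arrangement g : exists s, good_arrangement g s.
Proof.
have [s s_good _] := @good_arrangement_wdescents_interval g 0 (leq0n _).
by exists s.
Qed.

Lemma good_arrangement_iter_rot1 g s k :
  good_arrangement g s -> good_arrangement g (iter k (rot 1) s).
Proof.
elim: k => //= k IH /IH; rewrite !good_arrangementE descents_rot1.
by rewrite perm_rot.
Qed.

Lemma wdescents_iter_rot1 s k :
  wdescents (iter k (rot 1) s) = wdescents s + k * descents s %[mod size s].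
Proof.
elim: k => [|k IH]; first by rewrite addn0.
have size_k : size (iter k (rot 1) s) = size s.
  by elim: k {IH} => //= k; rewrite size_rot.
have des_k : descents (iter k (rot 1) s) = descents s.
  by elim: k {IH size_k} => //= k; rewrite descents_rot1.
rewrite iterS -{1}size_k wdescents_rot1 size_k des_k -modnDml IH modnDml.
by rewrite mulSnr addnA.
Qed.

Lemma uniformity_gap_gt0 g : (sum_mult_sq g < size g * nu g)%N ->
  (0 < \sum_(y <- undup g) (nu g - mult g y))%N.
Proof.
apply: contraLR; rewrite -!leqNgt leqn0 sum_nat_seq_eq0 => /allP nu_le.
rewrite /sum_mult_sq -sum_count_mem_undup big_distrl /= !big_seq; apply: leq_sum => y yg.
have /implyP/(_ isT) := nu_le y yg; rewrite subn_eq0 => nu_le_y.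
by rewrite expnS expn1 leq_mul2l nu_le_y orbT.
Qed.

Lemma uniformity_gap_modn g :
  \sum_(y <- undup g) (nu g - mult g y) = size (undup g) * nu g %[mod size g].
Proof.
suff <- : (\sum_(y <- undup g) (nu g - mult g y) + size g)%N = (size (undup g) * nu g)%N.
  by rewrite modnDr.
rewrite -(sum_count_mem_undup g) -big_split /=.
rewrite (eq_big_seq (fun=> nu g)) => [|y _]; last by rewrite subnK ?mult_le_nu.
by rewrite big_const_seq count_predT iter_addn_0 mulnC.
Qed.

Lemma good_arrangement_wdescents_mod g N : (sum_mult_sq g < size g * nu g)%N ->
  exists2 s, good_arrangement g s & wdescents s = N %[mod size g].
Proof.
move=> nonuniform; have size_gt0 : (0 < size g)%N by move: nonuniform; case: (size g).
have [t [k [t_le Nt]]] :=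
  cover_residues_interval_multiples (\sum_(y <- undup g) 'C(mult g y, 2)) N
    size_gt0 (uniformity_gap_gt0 nonuniform) (uniformity_gap_modn g).
have [s s_good s_wd] := good_arrangement_wdescents_interval t_le.
exists (iter k (rot 1) s); first exact: good_arrangement_iter_rot1.
move: s_good; rewrite good_arrangementE => /andP[/perm_size s_size /eqP s_des].
by rewrite -{1}s_size wdescents_iter_rot1 s_size s_wd s_des Nt.
Qed.

Lemma good_arrangement_wdescents_modz g (M : int) : (sum_mult_sq g < size g * nu g)%N ->
  exists2 s, good_arrangement g s & ((wdescents s)%:Z = M %[mod (size g)%:Z])%Z.
Proof.
move=> nonuniform; have size_gt0 : (0 < size g)%N by move: nonuniform; case: (size g).
have [s s_good s_wd] := good_arrangement_wdescents_mod `|(M %% (size g)%:Z)%Z|%N nonuniform.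
exists s => //; rewrite -(modz_mod M) -[(M %% _)%Z]gez0_abs ?modz_ge0 //.
  by rewrite !modz_nat s_wd.
by rewrite -lt0n.
Qed.

End GoodArrangements.

Lemma superdefect_gt0_nonuniform (R : realFieldType) n r (g : 'I_n -> seq R) :
  0 < superdefect r g -> exists i, (sum_mult_sq (g i) < r * nu (g i))%N.
Proof.
case: (pickP (fun i => sum_mult_sq (g i) < r * nu (g i))%N) => [i ? _|uniform].
  by exists i.
rewrite ltNge => /negP[]; apply: sumr_le0 => i _.
(* the i-th summand is r nu(g_i) - sum_alpha m_i(alpha)^2 *)
have /negbT := uniform i; rewrite -leqNgt -(lez_nat (r * _)) PoszM => le_i.
by rewrite expnS expn1 PoszM; lia.
Qed.

Lemma sum_mult_undup (R : realFieldType) (s : seq R) :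
  \sum_(x <- s) x = \sum_(x <- undup s) (mult s x)%:R * x.
Proof.
rewrite -[LHS](perm_big _ (perm_count_undup s)) big_flatten big_map /=.
by apply: eq_bigr => x _; rewrite big_nseq iter_addr_0 mulr_natl.
Qed.

Section ParabolicDegree.
Variables (R : realFieldType) (n r : nat) (a : 'I_n -> seq R).
Hypothesis size_a : forall i, size (a i) = r.

Lemma kseqE k1 j : kseq a k1 j = k1 + (\sum_(l < j) tau a l)%N%:Z + j%:Z * (2 - n%:Z).
Proof.
elim: j => [|j IH]; first by rewrite big_ord0 mul0r !addr0.
rewrite /= IH (_ : \sum_(l < j.+1) _ = \sum_(l < j) tau a l + tau a j)%N ?big_ord_recr //.
by rewrite PoszD intS; ring.
Qed.

Lemma sum_tau : (\sum_(j < r) \sum_(l < j) tau a l)%N = (\sum_i wdescents (a i))%N.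
Proof.
under [RHS]eq_bigr => i _ do rewrite wdescentsE size_a.
rewrite [RHS]exchange_big /=; apply: eq_bigr => j _.
rewrite [RHS]exchange_big /=; apply: eq_bigr => l _.
apply: eq_bigr => i _; rewrite /cyc size_a !modn_small //.
  by have := ltn_ord l; have := ltn_ord j; lia.
by have := ltn_ord l; have := ltn_ord j; lia.
Qed.

Lemma pdeg_bundleE k1 : pdeg_bundle r a k1 =
  (r%:Z * k1 + (\sum_i wdescents (a i))%:Z + 'C(r, 2)%:Z * (2 - n%:Z))%:~R
    + \sum_i \sum_(x <- a i) x.
Proof.
rewrite /pdeg_bundle /pdeg_line big_split /= -rmorph_sum exchange_big /=; congr (_%:~R + _).
  rewrite (eq_bigr _ (fun (j : 'I_r) _ => kseqE k1 j)).
  rewrite !big_split /= sumr_const card_ord -mulr_suml.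
  rewrite -sum_tau -(bin2_sum r) big_mkord !(big_morph Posz PoszD (erefl 0%:Z)).
  by rewrite -[k1 *+ r]mulr_natl natz.
apply: eq_bigr => i _; rewrite (big_nth 0) big_mkord size_a.
by apply: eq_bigr => j _; rewrite /cyc size_a modn_small.
Qed.

Lemma exists_pdeg_bundle_eq0 (z : int) :
    \sum_i \sum_(x <- a i) x = z%:~R ->
    ((\sum_i wdescents (a i))%:Z + 'C(r, 2)%:Z * (2 - n%:Z) + z = 0 %[mod r%:Z])%Z ->
  exists k1, pdeg_bundle r a k1 = 0.
Proof.
set N := (_ + _ + z)%R => weights; rewrite mod0z => /dvdz_mod0P/divzK N_eq.
exists (- divz N r); rewrite pdeg_bundleE weights -intrD mulrN mulrC N_eq.
by apply/eqP; rewrite intr_eq0; apply/eqP; rewrite /N; ring.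
Qed.

End ParabolicDegree.

Theorem theorem6p9 (R : realFieldType) (n r : nat) (g : 'I_n -> seq R)
  (hsize : forall i, size (g i) = r)
  (hrange : forall i, all (fun x => (0 <= x) && (x < 1)) (g i))
  (hint : exists z : int,
      \sum_(i < n) \sum_(x <- undup (g i)) (mult (g i) x)%:R * x = z%:~R)
  (hdefect : defect r g = 0)
  (hsuper : 0 < superdefect r g) :
  exists (a : 'I_n -> seq R) (k1 : int),
    (forall i, good_arrangement (g i) (a i)) /\ pdeg_bundle r a k1 = 0.
Proof.
have [z weights] := hint.
have [i0 nonuniform] := superdefect_gt0_nonuniform hsuper.
have [b b_good] : exists b : 'I_n -> seq R, forall i, good_arrangement (g i) (b i).
  exact: (fin_all_exists (P := fun i s => good_arrangement (g i) s))
           (fun i => exists_good_arrangement (g i)).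
pose P := (\sum_(i < n | i != i0) wdescents (b i))%:Z.
pose c := 'C(r, 2)%:Z * (2 - n%:Z).
rewrite -(hsize i0) in nonuniform.
have [s0 s0_good s0_wd] := good_arrangement_wdescents_modz (- (P + c + z)) nonuniform.
pose a i := if i == i0 then s0 else b i.
have a_good i : good_arrangement (g i) (a i) by rewrite /a; case: eqP => [->|].
have a_perm i : perm_eq (a i) (g i).
  by move: (a_good i); rewrite good_arrangementE => /andP[].
have size_a i : size (a i) = r by rewrite (perm_size (a_perm i)).
have [k1 deg0] : exists k1, pdeg_bundle r a k1 = 0.
  apply: (exists_pdeg_bundle_eq0 size_a (z := z)).
    rewrite -weights; apply: eq_bigr => i _.
    by rewrite (perm_big _ (a_perm i)) sum_mult_undup.
  rewrite (bigD1 i0) //= {1}/a eqxx PoszD (eq_bigr (fun i => wdescents (b i))); last first.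
    by move=> i /negbTE i_neq; rewrite /a i_neq.
  rewrite -/P -/c -(hsize i0) -!addrA -modzDml s0_wd modzDml.
  by congr (modz _ _); ring.
by exists a, k1.
Qed.
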